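(* Let $(\Xi,d_\Xi)$ be a metric space, let $\{P^\nu\}_{\nu\in\mathbb{N}}$ be probabilities on $(\Xi,\mathcal{B}(\Xi))$ converging weakly to a probability $P$, and let $\{h^\nu\}_{\nu\in\mathbb{N}}$ be measurable $\overline{\mathbb{R}}$-valued functions on $\Xi$ such that $$\liminf_{K\to+\infty}\ \liminf_{\nu\to+\infty}\mathbb{E}^{P^\nu}\big[h^\nu(\xi)\,\mathbb{1}\{\xi:h^\nu(\xi)\le -K\}\big]=0.$$ Then $$\liminf_{\nu\to+\infty}\mathbb{E}^{P^\nu}\big[h^\nu(\xi)\big]\ \ge\ \mathbb{E}^{P}\Big[\liminf_{(\nu,\zeta)\to(+\infty,\xi)}h^\nu(\zeta)\Big].$$
   Context: $\overline{\mathbb{R}}=\mathbb{R}\cup\{-\infty,+\infty\}$; $\mathcal{B}(\Xi)$ is the Borel $\sigma$-algebra; weak convergence means $\int\varphi\,dP^\nu\to\int\varphi\,dP$ for all bounded continuous $\varphi$. For a probability $\mu$ and measurable $\overline{\mathbb{R}}$-valued $g$, $\mathbb{E}^\mu[g]:=\int g_+\,d\mu-\int g_-\,d\mu$ with conventions $+\infty-\alpha=+\infty$ for all $\alpha\in\overline{\mathbb{R}}$ (in particular the expectation equals $+\infty$ when both $\int g_+$ and $\int g_-$ are $+\infty$) and $\beta-(+\infty)=-\infty$ for $\beta\in\mathbb{R}$. $\mathbb{1}\{B\}$ is the indicator of $B$. $\liminf_{(\nu,\zeta)\to(+\infty,\xi)}h^\nu(\zeta):=\lim_{\delta\downarrow0}\lim_{N\to\infty}\inf\{h^\nu(\zeta):\nu\ge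 N,\ d_\Xi(\zeta,\xi)<\delta\}$. *)

From HB Require Import structures.
From mathcomp Require Import all_boot all_order all_algebra.
From mathcomp Require Import all_classical all_reals all_analysis.
From mathcomp Require Import measurable_realfun.
Set Implicit Arguments. Unset Strict Implicit. Unset Printing Implicit Defensive.
Import Order.TTheory GRing.Theory Num.Theory.
Import numFieldNormedType.Exports.
Local Open Scope classical_set_scope.
Local Open Scope ring_scope.
Local Open Scope ereal_scope.

Definition borelType {R : realType} (T : pseudoPMetricType R)
  : measurableType (sigma_display (@open T)) :=
  g_sigma_algebraType (@open T).

(* Expectation with the paper's convention:
   E[g] = int g_+ - int g_-, with +oo - a = +oo for all a. *)
Definition Eexp {d} {T : measurableType d} {R : realType}
  (mu : {measure set T -> \bar R}) (g : T -> \bar R) : \bar R :=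
  let a := \int[mu]_x (g ^\+) x in
  let b := \int[mu]_x (g ^\-) x in
  if a == +oo then +oo else a - b.

(* liminf_{(nu,zeta) -> (+oo, xi)} h^nu(zeta)
   := lim_{delta -> 0+} lim_{N -> oo} inf { h^nu(zeta) : nu >= N, d(zeta,xi) < delta } *)
Definition joint_liminf {R : realType} {T : pseudoMetricType R}
  (h : nat -> T -> \bar R) (xi : T) : \bar R :=
  lim ((fun delta : R =>
          lim ((fun N : nat =>
                  ereal_inf [set h p.1 p.2 | p in
                     [set p : nat * T | (N <= p.1)%N /\ ball xi delta p.2]]) @ \oo))
       @ (0:R)^'+).

From HB Require Import structures.
From mathcomp Require Import all_boot all_order all_algebra.
From mathcomp Require Import all_classical all_reals all_analysis.
From mathcomp Require Import measurable_realfun.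
From mathcomp Require Import ring lra.
Import Order.TTheory GRing.Theory Num.Theory.
Import numFieldNormedType.Exports.
Local Open Scope classical_set_scope.
Local Open Scope ring_scope.
Local Open Scope ereal_scope.

(* Given e > 0, the uniform integrability hypothesis yields a level K > 0 beyond which the
   lower tails E^{P^n}[h^n 1{h^n <= -K}] are eventually > -e.  Splitting h^n into
   max(h^n, -K) and this tail reduces the claim to a Fatou lemma under weak convergence for
   the nonnegative functions f^n = max(h^n, -K) + K.  For it, the infima of f^nu over
   nu >= m and balls of radius 1/(m+1), truncated at m+1, are regularized by an
   inf-convolution into bounded Lipschitz functions below every f^n with n >= m.  Weak
   convergence applies to each of them, they increase to a measurable function dominating
   the joint liminf, and monotone convergence concludes. *)

Section extended_real_facts.
Context {R : realType}.

Lemma le_of_mine_natr (x y : \bar R) :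
  (\forall m \near \oo, mine x m.+1%:R%:E <= y) -> x <= y.
Proof.
move=> [N _ leNy].
have big (r : R) : exists2 m, (N <= m)%N & (r <= m.+1%:R)%R.
  exists (maxn N (Num.trunc r)); first exact: leq_maxl.
  apply/ltW/(lt_le_trans (truncnS_gt r)).
  by rewrite ler_nat ltnS leq_maxr.
case: x leNy => [x| |] leNy; last exact: leNye.
- have [m Nm xm] := big x.
  by rewrite -(min_l (_ : x%:E <= m.+1%:R%:E)) ?lee_fin //; exact: leNy.
- rewrite leye_eq; apply/eqP/eq_infty => r; have [m Nm rm] := big r.
  by apply: le_trans (leNy m Nm); rewrite min_r ?leey // lee_fin.
Qed.

Lemma lee_limn_einf (u v : (\bar R)^nat) :
  (\forall n \near \oo, u n <= v n) -> limn_einf u <= limn_einf v.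
Proof.
move=> [N _ uv]; rewrite !limn_einf_lim; apply: lee_lim; try exact: is_cvg_einfs.
exists N => // n /= Nn; apply: le_ereal_inf_tmp => _ [k /= nk <-].
apply: le_trans (uv k _); last by rewrite /= (leq_trans Nn nk).
by apply: ereal_inf_lbound; exists k.
Qed.

Lemma limn_einf_gt (u : (\bar R)^nat) (a : \bar R) :
  a < limn_einf u -> \forall n \near \oo, a < u n.
Proof.
rewrite limn_einf_lim (cvg_lim _ (@cvg_einfs_sup _ u)) //.
move=> /ereal_sup_gt[_ [N _ <-] aN]; exists N => // n /= Nn.
by apply: lt_le_trans aN _; apply: ereal_inf_lbound; exists n.
Qed.

Lemma limf_einf_pinfty_gt (u : R -> \bar R) (a : \bar R) :
  a < limf_einf u (@pinfty_nbhs R) -> exists2 K : R, (0 < K)%R & a < u K.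
Proof.
rewrite limf_einfE => /ereal_sup_gt[_ [A [M [_ MA]] <-] aA].
have MK : (M < `|M| + 1)%R by rewrite (le_lt_trans (ler_norm M)) // ltrDl.
exists (`|M| + 1)%R; first by rewrite ltr_pwDr.
by apply: lt_le_trans aA _; apply: ereal_inf_lbound; exists (`|M| + 1)%R => //; exact: MA.
Qed.

End extended_real_facts.

Section integral_facts.
Context {d} {T : measurableType d} {R : realType}.

Lemma ge0_le_integralT (mu : {measure set T -> \bar R}) (f g : T -> \bar R) :
  (forall x, 0 <= f x) -> (forall x, f x <= g x) ->
  \int[mu]_x f x <= \int[mu]_x g x.
Proof.
move=> f0 fg; have g0 x : 0 <= g x by rewrite (le_trans (f0 x)).
rewrite !ge0_integralTE //=; apply: ereal_sup_le => _ [s sf <-].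
by exists s => // x; exact: le_trans (sf x) (fg x).
Qed.

Lemma integral_funeneg_fin_num (P : probability T R) (f : T -> \bar R) (K : R) :
  (0 <= K)%R -> (forall x, (- K)%:E <= f x) -> \int[P]_x f^\- x \is a fin_num.
Proof.
move=> K0 fK; rewrite ge0_fin_numE; last by apply: integral_ge0 => x _; exact: funeneg_ge0.
apply: (@le_lt_trans _ _ (\int[P]_x (cst K%:E) x)); last first.
  by rewrite integral_cst // [X in _ * X]probability_setT mule1 ltry.
apply: ge0_le_integralT => x; first exact: funeneg_ge0.
by rewrite funenegE ge_max lee_fin K0 andbT leeNl -EFinN.
Qed.

Lemma integralD_cst (P : probability T R) (f : T -> \bar R) (K : R) :
  (0 <= K)%R -> measurable_fun setT f -> (forall x, (- K)%:E <= f x) ->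
  \int[P]_x (f x + K%:E) = \int[P]_x f x + K%:E.
Proof.
move=> K0 mf fK; have fin_neg := integral_funeneg_fin_num P f K K0 fK.
have fK0 x : 0 <= f x + K%:E by rewrite -leeBlDr // sub0e -EFinN.
have negfin x : f^\- x \is a fin_num.
  rewrite ge0_fin_numE ?funeneg_ge0 // funenegE gt_max ltry andbT.
  by rewrite lteNl (lt_le_trans _ (fK x)) // ltNyr.
have posE x : f x + K%:E + f^\- x = f^\+ x + cst K%:E x.
  have fE : f x = f^\+ x - f^\- x by rewrite {1}(funeposneg f).
  by rewrite fE addeAC subeK.
have mfK : measurable_fun setT (fun x => f x + K%:E).
  by apply: emeasurable_funD => //; exact: measurable_cst.
have mf_pos := measurable_funepos mf; have mf_neg := measurable_funeneg mf.
have sumE : \int[P]_x (f x + K%:E) + \int[P]_x f^\- x = \int[P]_x f^\+ x + K%:E.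
  rewrite -ge0_integralD // (eq_integral (fun x => f^\+ x + cst K%:E x)) //.
  by rewrite ge0_integralD // integral_cst // [X in _ * X]probability_setT mule1.
by rewrite -[LHS](addeK _ fin_neg) sumE [\int[P]_x f x]integralE addeAC.
Qed.

Lemma Eexp_le_integral (mu : {measure set T -> \bar R}) (f g : T -> \bar R) :
  (forall x, f x <= g x) -> \int[mu]_x g^\- x \is a fin_num ->
  Eexp mu f <= \int[mu]_x g x.
Proof.
move=> fg gfin.
have le_pos : \int[mu]_x f^\+ x <= \int[mu]_x g^\+ x.
  apply: ge0_le_integralT => x; first exact: funepos_ge0.
  by rewrite !funeposE; apply: le_max2.
have le_neg : \int[mu]_x g^\- x <= \int[mu]_x f^\- x.
  apply: ge0_le_integralT => x; first exact: funeneg_ge0.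
  by rewrite !funenegE; apply: le_max2; rewrite ?leeN2.
rewrite /Eexp [X in _ <= X]integralE; case: ifPn => [/eqP fy|_]; last exact: leeB.
move: le_pos; rewrite fy leye_eq => /eqP ->; rewrite addye ?leey //.
by move: gfin; rewrite -fin_numN fin_numE => /andP[].
Qed.

Lemma Eexp_ge_maxe_tail (P : probability T R) (f : T -> \bar R) (K : R) :
  (0 <= K)%R -> measurable_fun setT f ->
  \int[P]_x maxe (f x) (- K%:E) +
  Eexp P (fun x => f x * (\1_[set y | (f y <= - K%:E)%E] x)%:E) <= Eexp P f.
Proof.
move=> K0 mf.
set u := fun x => maxe (f x) (- K%:E).
set v := fun x => f x * (\1_[set y | (f y <= - K%:E)%E] x)%:E.
have vE x : v x = if f x <= - K%:E then f x else 0.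
  rewrite /v indicE; case: ifPn => fxK; first by rewrite mem_set //= mule1.
  by rewrite memNset /= ?mule0 //; apply/negP.
have NK0 : - K%:E <= 0 by rewrite -EFinN lee_fin oppr_le0.
have v_pos x : v^\+ x = 0.
  rewrite funeposE vE; case: ifPn => [fxK|_]; last by rewrite maxxx.
  by apply/max_idPr; exact: le_trans fxK NK0.
have u_pos x : u^\+ x = f^\+ x.
  by rewrite !funeposE /u -maxA (max_idPr NK0).
have neg_le x : f^\- x <= u^\- x + v^\- x.
  rewrite [X in _ <= _ + X]funenegE vE; case: ifPn => fxK.
    by rewrite funenegE leeDr // funeneg_ge0.
  have Kfx : - K%:E <= f x by rewrite ltW // ltNge.
  by rewrite oppe0 maxxx adde0 !funenegE /u (max_idPl Kfx).
have mu_ : measurable_fun setT u.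
  by apply: measurable_maxe => //; exact: measurable_cst.
have mv : measurable_fun setT v.
  apply: emeasurable_funM => //; apply/measurable_EFinP.
  apply: measurable_indic; rewrite -[X in measurable X]setTI.
  by apply: measurable_lee => //; exact: measurable_cst.
have int_neg_le : \int[P]_x f^\- x <= \int[P]_x u^\- x + \int[P]_x v^\- x.
  rewrite -ge0_integralD //; try exact: measurable_funeneg.
  by apply: ge0_le_integralT; [exact: funeneg_ge0|exact: neg_le].
have Ev : Eexp P v = - \int[P]_x v^\- x.
  by rewrite /Eexp (eq_integral (cst 0)) ?integral0 /= ?sub0e // => x _.
have u_neg_fin : \int[P]_x u^\- x \is a fin_num.
  by apply: (integral_funeneg_fin_num P u K K0) => x; rewrite /u le_max lexx orbT.
rewrite Ev /Eexp; case: ifPn => [_|_]; first exact: leey.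
rewrite [\int[P]_x u x]integralE (eq_integral (fun x => f^\+ x)) //.
by rewrite -addeA -oppeD ?fin_num_adde_defr //; exact: leeB.
Qed.

Lemma Eexp_ge_truncation (P : probability T R) (f : T -> \bar R) (K : R) :
  (0 <= K)%R -> measurable_fun setT f ->
  \int[P]_x (maxe (f x) (- K%:E) + K%:E) +
  Eexp P (fun x => f x * (\1_[set y | (f y <= - K%:E)%E] x)%:E) <= Eexp P f + K%:E.
Proof.
move=> K0 mf; rewrite integralD_cst //; last 2 first.
- by apply: measurable_maxe => //; exact: measurable_cst.
- by move=> x; rewrite EFinN le_max lexx orbT.
by rewrite addeAC leeD2r //; exact: Eexp_ge_maxe_tail.
Qed.

End integral_facts.

Section tail_ball_inf.
Context {R : realType} {T : pseudoMetricType R}.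
Implicit Types (f g : nat -> T -> \bar R) (x : T).

Definition tail_ball_inf f (N : nat) (r : R) x : \bar R :=
  ereal_inf [set f p.1 p.2 | p in [set p : nat * T | (N <= p.1)%N /\ ball x r p.2]].

Lemma le_tail_ball_inf f N N' r r' x x' : (N <= N')%N ->
  ball x' r' `<=` ball x r -> tail_ball_inf f N r x <= tail_ball_inf f N' r' x'.
Proof.
move=> NN' rr'; apply: le_ereal_inf => _ [p [N'p x'p] <-]; exists p => //.
by split; [exact: leq_trans NN' N'p | exact: rr'].
Qed.

Lemma tail_ball_inf_le f N r x n : (0 < r)%R -> (N <= n)%N ->
  tail_ball_inf f N r x <= f n x.
Proof.
by move=> r0 Nn; apply: ereal_inf_lbound; exists (n, x) => //; split => //; exact: ballxx.
Qed.

Lemma tail_ball_inf_ge0 f N r x : (forall n y, 0 <= f n y) -> 0 <= tail_ball_inf f N r x.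
Proof. by move=> f0; apply: le_ereal_inf_tmp => _ [p _ <-]. Qed.

Lemma tail_ball_infD f g (K : R) N r x : (forall n y, g n y + K%:E <= f n y) ->
  tail_ball_inf g N r x + K%:E <= tail_ball_inf f N r x.
Proof.
move=> gKf; apply: le_ereal_inf_tmp => _ [p Np <-].
by apply: le_trans (gKf p.1 p.2); rewrite leeD2r //; apply: ereal_inf_lbound; exists p.
Qed.

Lemma joint_liminf_le_sup f x (s : nat -> R) : s @ \oo --> 0%R ->
  joint_liminf f x <= ereal_sup (range (fun m => tail_ball_inf f m (s m) x)).
Proof.
move=> s0; set S := ereal_sup _.
have innerE r : lim ((fun N => tail_ball_inf f N r x) @ \oo) =
    ereal_sup (range (fun N => tail_ball_inf f N r x)).
  apply: cvg_lim => //; apply: ereal_nondecreasing_cvgn => N N' NN'.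
  exact: le_tail_ball_inf.
have le_S r : (0 < r)%R -> ereal_sup (range (fun N => tail_ball_inf f N r x)) <= S.
  move=> r0; apply: ge_ereal_sup => _ [N _ <-].
  have /cvgr_le/(_ r r0)[M _ sM] := s0; set m := maxn N M.
  apply: (@le_trans _ _ (tail_ball_inf f m (s m) x)).
    apply: le_tail_ball_inf; first exact: leq_maxl.
    by apply: le_ball; apply: sM; exact: leq_maxr.
  by apply: ereal_sup_ubound; exists m.
rewrite /joint_liminf; apply: lime_le.
  apply/cvg_ex; eexists.
  apply: (@nonincreasing_at_right_cvge _ _ _ (+oo%O)) => // r1 r2 _ _ r12.
  rewrite !innerE; apply: ge_ereal_sup => _ [N _ <-].
  apply: (@le_trans _ _ (tail_ball_inf f N r1 x)).
    exact: le_tail_ball_inf (le_ball r12).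
  by apply: ereal_sup_ubound; exists N.
near=> r; rewrite innerE; apply: le_S.
by near: r; exact: nbhs_right_gt.
Unshelve. all: by end_near. Qed.

End tail_ball_inf.

Section lipschitz_minorant.
Context {R : realType} {T : pseudoMetricType R} (f : nat -> T -> \bar R).
Hypothesis f_ge0 : forall n x, 0 <= f n x.

Let slope (m : nat) : R := m.+1%:R ^+ 2.

Let slope_gt0 m : (0 < slope m)%R.
Proof. by rewrite exprn_gt0. Qed.

Let slope_harmonic m : (slope m * harmonic m = m.+1%:R)%R.
Proof. by rewrite /slope /= expr2 mulfK. Qed.

Definition trunc_tail_inf m y : \bar R :=
  mine (tail_ball_inf f m (harmonic m) y) m.+1%:R%:E.

(* Inf-convolution of trunc_tail_inf m with slope (m+1)^2.  As slope m * harmonic m = m+1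
   is the truncation level, points farther than harmonic m from x never lower it. *)
Definition lip_minorant m x : \bar R :=
  ereal_inf [set trunc_tail_inf m q.1 + (slope m * q.2)%:E | q in
    [set q : T * R | (0 < q.2)%R /\ ball x q.2 q.1]].

Lemma trunc_tail_inf_ge0 m y : 0 <= trunc_tail_inf m y.
Proof. by rewrite le_min tail_ball_inf_ge0 // lee_fin ler0n. Qed.

Lemma trunc_tail_inf_le m y : trunc_tail_inf m y <= m.+1%:R%:E.
Proof. by rewrite ge_min lexx orbT. Qed.

Lemma trunc_tail_infS m y : trunc_tail_inf m y <= trunc_tail_inf m.+1 y.
Proof.
apply: le_min2; last by rewrite lee_fin ler_nat.
apply: le_tail_ball_inf => //; apply: le_ball.
by rewrite /= lef_pV2 ?posrE // ler_nat.
Qed.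

Lemma tail_ball_inf_le_lip_minorant m x :
  mine (tail_ball_inf f m (harmonic m *+ 2) x) m.+1%:R%:E <= lip_minorant m x.
Proof.
apply: le_ereal_inf_tmp => _ [[y s] [/= s0 xy] <-].
have [s_small|s_large] := ltP s (harmonic m).
- apply: (@le_trans _ _ (trunc_tail_inf m y)); last first.
    by rewrite leeDl // lee_fin mulr_ge0 // ltW.
  apply: le_min2 => //; apply: le_tail_ball_inf => // z yz.
  apply: le_ball (ball_triangle xy yz).
  by rewrite mulr2n lerD2r ltW.
- rewrite ge_min; apply/orP; right.
  apply: (@le_trans _ _ (slope m * s)%:E); last by rewrite leeDr // trunc_tail_inf_ge0.
  by rewrite lee_fin -slope_harmonic ler_wpM2l // ltW.
Qed.

Lemma lip_minorant_le_trunc m x : lip_minorant m x <= trunc_tail_inf m x.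
Proof.
apply/lee_addgt0Pr => e e0; have es0 : (0 < e / slope m)%R by rewrite divr_gt0.
apply: (@le_trans _ _ (trunc_tail_inf m x + (slope m * (e / slope m))%:E)).
  by apply: ereal_inf_lbound; exists (x, e / slope m)%R => //; split => //; exact: ballxx.
by rewrite mulrC divfK // gt_eqF.
Qed.

Lemma lip_minorant_ge0 m x : 0 <= lip_minorant m x.
Proof.
apply: le_trans (tail_ball_inf_le_lip_minorant m x).
by rewrite le_min tail_ball_inf_ge0 //=.
Qed.

Lemma lip_minorant_le m x : lip_minorant m x <= m.+1%:R%:E.
Proof. exact: le_trans (lip_minorant_le_trunc m x) (trunc_tail_inf_le m x). Qed.

Lemma lip_minorant_le_tail m n x : (m <= n)%N -> lip_minorant m x <= f n x.
Proof.
move=> mn; apply: le_trans (lip_minorant_le_trunc m x) _.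
by rewrite ge_min tail_ball_inf_le ?harmonic_gt0.
Qed.

Lemma lip_minorantS m x : lip_minorant m x <= lip_minorant m.+1 x.
Proof.
apply: le_ereal_inf_tmp => _ [[y s] [/= s0 xy] <-].
apply: (@le_trans _ _ (trunc_tail_inf m y + (slope m * s)%:E)).
  by apply: ereal_inf_lbound; exists (y, s).
apply: leeD; first exact: trunc_tail_infS.
by rewrite lee_fin ler_wpM2r ?(ltW s0) // /slope -!natrX ler_nat leq_exp2r.
Qed.

Lemma lip_minorant_lipschitz m x x' s : (0 < s)%R -> ball x s x' ->
  lip_minorant m x' <= lip_minorant m x + (slope m * s)%:E.
Proof.
move=> s0 xx'; rewrite -leeBlDr //; apply: le_ereal_inf_tmp.
move=> _ [[y r] [/= r0 xy] <-]; rewrite EFinN leeBlDr //.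
apply: (@le_trans _ _ (trunc_tail_inf m y + (slope m * (s + r))%:E)).
  apply: ereal_inf_lbound; exists (y, s + r)%R => //; split => /=.
    by rewrite addr_gt0.
  exact: ball_triangle (ball_sym xx') xy.
by rewrite mulrDr EFinD addeA addeAC.
Qed.

Lemma lip_minorant_fin_num m x : lip_minorant m x \is a fin_num.
Proof.
rewrite ge0_fin_numE ?lip_minorant_ge0 //.
exact: le_lt_trans (lip_minorant_le m x) (ltry _).
Qed.

Definition lip_minorantR m x : R := fine (lip_minorant m x).

Lemma lip_minorantRE m x : (lip_minorantR m x)%:E = lip_minorant m x.
Proof. by rewrite fineK // lip_minorant_fin_num. Qed.

Lemma lip_minorantR_bounded m x : (`|lip_minorantR m x| <= m.+1%:R)%R.
Proof.
rewrite ger0_norm -lee_fin lip_minorantRE ?lip_minorant_le //.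
by rewrite lip_minorant_ge0.
Qed.

Lemma continuous_lip_minorantR m : continuous (lip_minorantR m).
Proof.
move=> x; apply/cvgrPdist_lt => e e0; have s0 : (0 < e / (2 * slope m))%R.
  by rewrite divr_gt0 // mulr_gt0.
near=> x'; have xx' : ball x (e / (2 * slope m)) x' by near: x'; exact: nbhsx_ballx.
have := @lip_minorant_lipschitz m _ _ _ s0 xx'.
have := @lip_minorant_lipschitz m _ _ _ s0 (ball_sym xx').
rewrite -!lip_minorantRE -!EFinD !lee_fin.
have -> : (slope m * (e / (2 * slope m)) = e / 2)%R.
  by field; rewrite gt_eqF.
move=> le1 le2; rewrite ltr_norml; apply/andP; split; lra.
Unshelve. all: by end_near. Qed.

Lemma lip_minorant_nondecreasing x : nondecreasing_seq (lip_minorant ^~ x).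
Proof. by apply/nondecreasing_seqP => m; exact: lip_minorantS. Qed.

Definition lip_envelope x : \bar R := limn (lip_minorant ^~ x).

Lemma lip_envelopeE x : lip_envelope x = ereal_sup (range (lip_minorant ^~ x)).
Proof.
by apply: cvg_lim => //; apply: ereal_nondecreasing_cvgn; exact: lip_minorant_nondecreasing.
Qed.

Lemma lip_minorant_le_envelope m x : lip_minorant m x <= lip_envelope x.
Proof. by rewrite lip_envelopeE; apply: ereal_sup_ubound; exists m. Qed.

Lemma lip_envelope_ge0 x : 0 <= lip_envelope x.
Proof. exact: le_trans (lip_minorant_ge0 0 x) (lip_minorant_le_envelope 0 x). Qed.

Lemma tail_ball_inf_le_envelope m x :
  tail_ball_inf f m (harmonic m *+ 2) x <= lip_envelope x.
Proof.
apply: le_of_mine_natr; near=> n.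
have mn : (m <= n)%N by near: n; exact: nbhs_infty_ge.
apply: le_trans (lip_minorant_le_envelope n x).
apply: le_trans (tail_ball_inf_le_lip_minorant n x); apply: le_min2 => //.
apply: le_tail_ball_inf => //; apply: le_ball; rewrite lerMn2r /=.
by rewrite lef_pV2 ?posrE // ler_nat.
Unshelve. all: by end_near. Qed.

Lemma joint_liminf_le_envelope (g : nat -> T -> \bar R) (K : R) x :
  (forall n y, g n y + K%:E <= f n y) -> joint_liminf g x + K%:E <= lip_envelope x.
Proof.
move=> gKf; rewrite -leeBrDr //.
have harmonic2 : (fun m => harmonic m *+ 2)%R @ \oo --> (0 : R)%R.
  by rewrite -(mul0rn _ 2)%R; exact: cvgMn cvg_harmonic.
apply: le_trans (joint_liminf_le_sup g x _ harmonic2) _.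
apply: ge_ereal_sup => _ [m _ <-]; rewrite leeBrDr //.
by apply: le_trans (tail_ball_inf_le_envelope m x); exact: tail_ball_infD.
Qed.

End lipschitz_minorant.

Lemma continuous_borel_measurable {R : realType} {T : pseudoPMetricType R}
  (g : T -> R) : continuous g -> measurable_fun [set: borelType T] g.
Proof.
move=> cg; apply: (@measurability _ _ (borelType T) R setT g (RGenOInfty.G (R:=R))).
  exact: RGenOInfty.measurableE.
move=> _ [_ [a ->] <-]; rewrite setTI; apply: sub_sigma_algebra.
by apply: open_comp; [move=> y _; exact: cg | exact: rray_open].
Qed.

Section weak_convergence.
Context {R : realType} {T : pseudoPMetricType R}.
Context {P_ : nat -> probability (borelType T) R} {P : probability (borelType T) R}.
Hypothesis weak_cvg : forall phi : T -> R, continuous phi ->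
  (exists M : R, forall x, (`|phi x| <= M)%R) ->
  (\int[P_ n]_x (phi x)%:E) @[n --> \oo] --> \int[P]_x (phi x)%:E.
Context {f : nat -> borelType T -> \bar R}.
Hypothesis f_ge0 : forall n x, 0 <= f n x.

Lemma measurable_lip_minorant m :
  measurable_fun setT (lip_minorant f m : borelType T -> \bar R).
Proof.
have -> : lip_minorant f m = EFin \o lip_minorantR f m.
  by apply/funext => x /=; rewrite lip_minorantRE.
apply/measurable_EFinP; apply: continuous_borel_measurable.
exact: continuous_lip_minorantR.
Qed.

Lemma measurable_lip_envelope :
  measurable_fun setT (lip_envelope f : borelType T -> \bar R).
Proof.
apply: (@emeasurable_fun_cvg _ (borelType T) R setT (lip_minorant f)).
  exact: measurable_lip_minorant.
move=> x _.
rewrite lip_envelopeE; apply: ereal_nondecreasing_cvgn.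
exact: lip_minorant_nondecreasing.
Qed.

Lemma integral_lip_minorant_le m :
  \int[P]_x lip_minorant f m x <= limn_einf (fun n => \int[P_ n]_x f n x).
Proof.
have cvg_m := weak_cvg _ (continuous_lip_minorantR _ f_ge0 m)
  (ex_intro _ _ (lip_minorantR_bounded _ f_ge0 m)).
rewrite (eq_integral (fun x : borelType T => (lip_minorantR f m x)%:E)); last first.
  by move=> x _; rewrite lip_minorantRE.
rewrite -(cvg_limn_einf_sup cvg_m).1; apply: lee_limn_einf; near=> n.
apply: ge0_le_integralT => x; rewrite lip_minorantRE //; first exact: lip_minorant_ge0.
by apply: lip_minorant_le_tail => //; near: n; exact: nbhs_infty_ge.
Unshelve. all: by end_near. Qed.

Lemma integral_lip_envelope_le :
  \int[P]_x lip_envelope f x <= limn_einf (fun n => \int[P_ n]_x f n x).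
Proof.
rewrite (monotone_convergence P measurableT measurable_lip_minorant) //; last 2 first.
- by move=> m x _; exact: lip_minorant_ge0.
- by move=> x _; exact: lip_minorant_nondecreasing.
apply: lime_le; last exact: nearW integral_lip_minorant_le.
apply: ereal_nondecreasing_is_cvgn => m m' mm'.
apply: ge0_le_integralT => x; first exact: lip_minorant_ge0.
exact: lip_minorant_nondecreasing.
Qed.

Lemma Eexp_joint_liminf_le (g : nat -> borelType T -> \bar R) (K : R) :
  (0 <= K)%R -> (forall n x, g n x + K%:E <= f n x) ->
  Eexp P (joint_liminf (T:=T) g) + K%:E <= limn_einf (fun n => \int[P_ n]_x f n x).
Proof.
move=> K0 gKf; apply: le_trans integral_lip_envelope_le.
pose Y (x : borelType T) := lip_envelope f x - K%:E.
have YK x : (- K)%:E <= Y x.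
  by rewrite /Y leeBrDr // -EFinD addNr; exact: lip_envelope_ge0.
have mY : measurable_fun setT Y.
  by apply: emeasurable_funB; [exact: measurable_lip_envelope | exact: measurable_cst].
have -> : \int[P]_x lip_envelope f x = \int[P]_x Y x + K%:E.
  by rewrite -integralD_cst //; apply: eq_integral => x _; rewrite /Y subeK.
rewrite leeD2r //; apply: Eexp_le_integral.
  by move=> x; rewrite /Y leeBrDr //; exact: joint_liminf_le_envelope.
exact: integral_funeneg_fin_num P Y K K0 YK.
Qed.

End weak_convergence.

Lemma limn_einf_Eexp_ge_truncation {d} {T : measurableType d} {R : realType}
  (P_ : nat -> probability T R) (h : nat -> T -> \bar R) (K a : R) :
  (0 <= K)%R -> (forall n, measurable_fun setT (h n)) ->
  (\forall n \near \oo, a%:E <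
    Eexp (P_ n) (fun x => h n x * (\1_[set y | (h n y <= - K%:E)%E] x)%:E)) ->
  a%:E + limn_einf (fun n => \int[P_ n]_x (maxe (h n x) (- K%:E) + K%:E)) <=
  K%:E + limn_einf (fun n => Eexp (P_ n) (h n)).
Proof.
move=> K0 mh tail_gt; rewrite -!limn_einf_shift //; apply: lee_limn_einf.
apply: filterS tail_gt => n /ltW tail_ge.
rewrite addeC [K%:E + _]addeC; apply: le_trans (Eexp_ge_truncation _ _ _ K0 (mh n)).
exact: leeD2l.
Qed.

Theorem theorem3p4 (R : realType) (T : pseudoPMetricType R)
  (hT : hausdorff_space T)
  (P_ : nat -> probability (borelType T) R) (P : probability (borelType T) R)
  (hweak : forall phi : T -> R, continuous phi ->
      (exists M : R, forall x, (`|phi x| <= M)%R) ->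
      (\int[P_ n]_x (phi x)%:E) @[n --> \oo] --> \int[P]_x (phi x)%:E)
  (h : nat -> borelType T -> \bar R)
  (hmeas : forall n, measurable_fun setT (h n))
  (hunif : limf_einf (fun K : R =>
              limn_einf (fun n => Eexp (P_ n)
                (fun x => h n x * (\1_[set y | (h n y <= - K%:E)%E] x)%:E)))
            (@pinfty_nbhs R) = 0) :
  limn_einf (fun n => Eexp (P_ n) (h n)) >= Eexp P (joint_liminf (T:=T) h).
Proof.
apply/lee_addgt0Pr => e e0.
have : (- e)%:E < limf_einf (fun K : R => limn_einf (fun n => Eexp (P_ n)
    (fun x => h n x * (\1_[set y | (h n y <= - K%:E)%E] x)%:E))) (@pinfty_nbhs R).
  by rewrite hunif lte_fin oppr_lt0.
move=> /limf_einf_pinfty_gt[K K0 /limn_einf_gt tail_gt].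
pose f n x := maxe (h n x) (- K%:E) + K%:E.
have f_ge0 n x : 0 <= f n x by rewrite -leeBlDr // sub0e le_max lexx orbT.
have hKf n x : h n x + K%:E <= f n x by rewrite leeD2r // le_max lexx.
have := leeD2l (- e)%:E (Eexp_joint_liminf_le hweak f_ge0 h K (ltW K0) hKf).
move/le_trans/(_ (limn_einf_Eexp_ge_truncation P_ h K (- e) (ltW K0) hmeas tail_gt)).
by rewrite addeC addeAC [K%:E + _]addeC leeD2rE // -leeBrDr // EFinN oppeK.
Qed.
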